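(* With $a(p)=\sqrt{\lambda_0-2\Gamma(p)}$, one has $\Xi_\mu(\lambda_0,0)\le0$ if and only if $$\int_{p_0}^0a(p)\Big(\int_{p_0}^p\frac{ds}{a^3(s)}\Big)^2dp\le\frac{\sigma}{g^2}.$$
   Context: Setting: - $g>0$, $\sigma>0$, and $p_0<p_1<0$. - $\gamma=\gamma_1$ on $[p_0,p_1)$ and $\gamma=\gamma_2$ on $(p_1,0]$, with $\gamma_1\in C^\alpha([p_0,p_1])$ and $\gamma_2\in C^\alpha([p_1,0])$. - $\Gamma(p)=\int_0^p\gamma$, and $a(p;\lambda)=\sqrt{\lambda-2\Gamma(p)}$. - $\mathfrak z(\cdot;\lambda,\mu)$ solves $(a^3\mathfrak z')'-\mu a\mathfrak z=0$ on $(p_0,0)$ with $\mathfrak z(p_0)=0$, $\mathfrak z'(p_0)=1$. - $\Xi(\lambda,\mu):=\lambda^{3/2}\mathfrak z'(0;\lambda,\mu)-(g+\sigma\mu)\mathfrak z(0;\lambda,\mu)$. - $\lambda_0$ is the unique $\lambda>2\max\Gamma$ with $\frac1g=\int_{p_0}^0a(p;\lambda)^{-3}dp$. *)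

From Stdlib Require Import Reals Lra ClassicalEpsilon.
Open Scope R_scope.

(* Total (oriented) Riemann integral: the Stdlib RiemannInt when f is
   Riemann integrable on [a,b] (value is proof-independent), 0 otherwise. *)
Definition Rint (f : R -> R) (a b : R) : R :=
  match excluded_middle_informative
          (exists r : R, exists pr : Riemann_integrable f a b, RiemannInt pr = r) with
  | left H => proj1_sig (constructive_indefinite_description _ H)
  | right _ => 0
  end.

Definition holder_on (alpha lo hi : R) (f : R -> R) : Prop :=
  exists C : R, forall x y, lo <= x <= hi -> lo <= y <= hi -> x <> y ->
    Rabs (f x - f y) <= C * Rpower (Rabs (x - y)) alpha.

Definition right_deriv (f : R -> R) (x l : R) : Prop :=
  forall eps, 0 < eps -> exists delta, 0 < delta /\
    forall h, 0 < h < delta -> Rabs ((f (x + h) - f x) / h - l) < eps.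

Definition left_deriv (f : R -> R) (x l : R) : Prop :=
  forall eps, 0 < eps -> exists delta, 0 < delta /\
    forall h, - delta < h < 0 -> Rabs ((f (x + h) - f x) / h - l) < eps.

(* gamma = gamma1 on [p0,p1), gamma2 on (p1,0] (value at p1 irrelevant). *)
Definition gam (p1 : R) (gamma1 gamma2 : R -> R) (p : R) : R :=
  if Rlt_dec p p1 then gamma1 p else gamma2 p.

Definition Gam (p1 : R) (gamma1 gamma2 : R -> R) (p : R) : R :=
  Rint (gam p1 gamma1 gamma2) 0 p.

Definition aa (p1 : R) (gamma1 gamma2 : R -> R) (lam p : R) : R :=
  sqrt (lam - 2 * Gam p1 gamma1 gamma2 p).

(* z (with derivative dz) solves (a^3 z')' - mu a z = 0 on (p0,0),
   z(p0) = 0, z'(p0) = 1; derivatives at the endpoints are one-sided. *)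
Definition is_frak_z (p0 p1 : R) (gamma1 gamma2 : R -> R) (lam mu : R)
    (z dz : R -> R) : Prop :=
  z p0 = 0 /\ dz p0 = 1 /\
  right_deriv z p0 (dz p0) /\ left_deriv z 0 (dz 0) /\
  (forall p, p0 < p < 0 ->
     derivable_pt_lim z p (dz p) /\
     derivable_pt_lim (fun q => (aa p1 gamma1 gamma2 lam q) ^ 3 * dz q) p
                      (mu * aa p1 gamma1 gamma2 lam p * z p)).

Definition Xi (g sigma lam mu : R) (z dz : R -> R) : R :=
  Rpower lam (3/2) * dz 0 - (g + sigma * mu) * z 0.

(* Write a = aa p1 gamma1 gamma2 lam0, A = a(p0)^3 and I(p) = int_{p0}^p a^{-3}.
   Integrating (a^3 z')' = mu a z twice with z(p0) = 0, z'(p0) = 1 gives the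
   integral equation
       z_mu(p) = int_{p0}^p (A + mu J_mu(s)) / a(s)^3 ds,   J_mu(s) = int_{p0}^s a z_mu,
   together with a(0)^3 z_mu'(0) = A + mu J_mu(0).  Since lambda0^{3/2} = a(0)^3
   and g I(0) = 1, this factorises Xi(lambda0, mu) = mu G(mu) with
       G(mu) = J_mu(0) - g K_mu - sigma A I(0) - sigma mu K_mu,   K_mu = int_{p0}^0 J_mu / a^3.
   A smallness argument on the integral equation shows z_mu -> z_0 uniformly, so G
   is continuous at 0 and the derivative is G(0).  At mu = 0 we have z_0 = A I, and
   an integration by parts gives K_0 = I(0) J_0(0) - A int_{p0}^0 a I^2, whence
       G(0) = A g (int_{p0}^0 a I^2 - sigma / g^2). *)

From Stdlib Require Import Reals Lra ClassicalEpsilon.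
From Coquelicot Require Import Coquelicot.
Open Scope R_scope.

Lemma continuity_pow_fct (f : R -> R) (n : nat) :
  continuity f -> continuity (fun y => f y ^ n).
Proof.
  intros Hf. apply (continuity_comp f (fun y => y ^ n)); [exact Hf|].
  apply derivable_continuous, derivable_pow.
Qed.

Ltac solve_continuity :=
  solve [ repeat first
    [ assumption
    | apply continuity_minus | apply continuity_plus | apply continuity_mult
    | apply continuity_opp | apply continuity_pow_fct
    | apply continuity_const; intros ? ?; reflexivity ] ].

Definition clamp (lo hi x : R) : R := Rmax lo (Rmin hi x).

Lemma clamp_in (lo hi x : R) : lo <= hi -> lo <= clamp lo hi x <= hi.
Proof. intros; unfold clamp, Rmax, Rmin; repeat destruct Rle_dec; lra. Qed.

Lemma clamp_id (lo hi x : R) : lo <= x <= hi -> clamp lo hi x = x.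
Proof. intros; unfold clamp, Rmax, Rmin; repeat destruct Rle_dec; lra. Qed.

Lemma clamp_lip (lo hi x y : R) :
  lo <= hi -> Rabs (clamp lo hi x - clamp lo hi y) <= Rabs (x - y).
Proof.
  intros; unfold clamp, Rmax, Rmin; repeat destruct Rle_dec; unfold Rabs;
    repeat destruct Rcase_abs; lra.
Qed.

Definition cont_on (lo hi : R) (f : R -> R) : Prop :=
  forall x, lo <= x <= hi -> forall eps, 0 < eps -> exists d, 0 < d /\
    forall y, lo <= y <= hi -> Rabs (y - x) < d -> Rabs (f y - f x) < eps.

Lemma continuity_pt_eps (f : R -> R) (x : R) : continuity_pt f x ->
  forall eps, 0 < eps ->
    exists d, 0 < d /\ forall y, Rabs (y - x) < d -> Rabs (f y - f x) < eps.
Proof.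
  unfold continuity_pt, continue_in, limit1_in, limit_in. intros H eps He.
  destruct (H eps He) as [d [Hd Hy]]. exists d; split; [lra|]. intros y Hyx.
  destruct (Req_dec y x) as [->|Hne].
  - rewrite Rminus_diag, Rabs_R0; lra.
  - apply Hy. split; [split; [exact I| auto] | exact Hyx].
Qed.

Lemma continuity_cont_on (lo hi : R) (f : R -> R) : continuity f -> cont_on lo hi f.
Proof.
  intros H x _ eps He. destruct (continuity_pt_eps f x (H x) eps He) as [d [Hd P]].
  exists d; split; auto.
Qed.

Lemma cont_on_minus (lo hi : R) (f g : R -> R) :
  cont_on lo hi f -> cont_on lo hi g -> cont_on lo hi (fun x => f x - g x).
Proof.
  intros Hf Hg x Hx eps He.
  destruct (Hf x Hx (eps / 2)) as [d1 [Hd1 P1]]; [lra|].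
  destruct (Hg x Hx (eps / 2)) as [d2 [Hd2 P2]]; [lra|].
  exists (Rmin d1 d2); split; [apply Rmin_pos; auto|].
  intros y Hy Hyx. pose proof (Rmin_l d1 d2). pose proof (Rmin_r d1 d2).
  specialize (P1 y Hy ltac:(lra)). specialize (P2 y Hy ltac:(lra)).
  replace (f y - g y - (f x - g x)) with ((f y - f x) - (g y - g x)) by ring.
  eapply Rle_lt_trans; [apply Rabs_triang|]. rewrite Rabs_Ropp. lra.
Qed.

(* A function continuous on [lo, hi] extends, through the clamp, to a function
   continuous on all of R; this is how integrands are fed to Coquelicot. *)
Lemma continuity_clamp (lo hi : R) (f : R -> R) :
  lo <= hi -> cont_on lo hi f -> continuity (fun y => f (clamp lo hi y)).
Proof.
  intros Hlh H x. unfold continuity_pt, continue_in, limit1_in, limit_in.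
  intros eps He. simpl. unfold R_dist.
  destruct (H (clamp lo hi x) (clamp_in lo hi x Hlh) eps He) as [d [Hd Hy]].
  exists d; split; [lra|]. intros y [_ Hyx]. apply Hy; [apply clamp_in; auto|].
  eapply Rle_lt_trans; [apply clamp_lip; auto | exact Hyx].
Qed.

Lemma scaled_lt (C u eps : R) :
  0 < eps -> 0 <= u <= eps / (Rabs C + 1) -> Rabs C * u < eps.
Proof.
  intros He Hu. pose proof (Rabs_pos C).
  assert (Hq : 0 < eps / (Rabs C + 1)) by (apply Rdiv_lt_0_compat; lra).
  apply Rle_lt_trans with (Rabs C * (eps / (Rabs C + 1))); [nra|].
  apply Rlt_le_trans with ((Rabs C + 1) * (eps / (Rabs C + 1))); [nra|].
  right. field. lra.
Qed.

Lemma lipschitz_continuity (f : R -> R) (M : R) :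
  (forall x y, Rabs (f x - f y) <= M * Rabs (x - y)) -> continuity f.
Proof.
  intros H x. unfold continuity_pt, continue_in, limit1_in, limit_in.
  intros eps He. simpl. unfold R_dist.
  exists (eps / (Rabs M + 1)). split.
  - apply Rdiv_lt_0_compat; [lra | pose proof (Rabs_pos M); lra].
  - intros y [_ Hy]. eapply Rle_lt_trans; [apply H|].
    eapply Rle_lt_trans; [|apply (scaled_lt M (Rabs (y - x)) eps He)].
    + apply Rmult_le_compat_r; [apply Rabs_pos | apply RRle_abs].
    + split; [apply Rabs_pos | lra].
Qed.

Lemma continuity_pt_of_local_lipschitz (G : R -> R) (C mu0 : R) : 0 < mu0 ->
  (forall mu, Rabs mu < mu0 -> Rabs (G mu - G 0) <= C * Rabs mu) -> continuity_pt G 0.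
Proof.
  intros Hmu0 HG. unfold continuity_pt, continue_in, limit1_in, limit_in.
  intros eps He. simpl. unfold R_dist.
  assert (Hq : 0 < eps / (Rabs C + 1)) by (apply Rdiv_lt_0_compat; [|pose proof (Rabs_pos C)]; lra).
  exists (Rmin mu0 (eps / (Rabs C + 1))). split; [apply Rmin_pos; auto|].
  intros x [_ Hx]. rewrite Rminus_0_r in Hx.
  pose proof (Rmin_l mu0 (eps / (Rabs C + 1))). pose proof (Rmin_r mu0 (eps / (Rabs C + 1))).
  eapply Rle_lt_trans; [apply HG; lra|].
  eapply Rle_lt_trans; [|apply (scaled_lt C (Rabs x) eps He); split; [apply Rabs_pos | lra]].
  apply Rmult_le_compat_r; [apply Rabs_pos | apply RRle_abs].
Qed.

Lemma holder_cont_on (alpha lo hi : R) (f : R -> R) :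
  0 < alpha -> holder_on alpha lo hi f -> cont_on lo hi f.
Proof.
  intros Ha [C HC] x Hx eps He.
  set (e := eps / (Rabs C + 1)).
  assert (He' : 0 < e) by (apply Rdiv_lt_0_compat; [lra| pose proof (Rabs_pos C); lra]).
  exists (Rpower e (/ alpha)). split; [apply exp_pos|].
  intros y Hy Hyx. destruct (Req_dec y x) as [->|Hne].
  { rewrite Rminus_diag, Rabs_R0; lra. }
  assert (Hr : Rpower (Rabs (x - y)) alpha <= e).
  { replace e with (Rpower (Rpower e (/ alpha)) alpha)
      by (rewrite Rpower_mult, Rinv_l, Rpower_1; lra).
    apply Rle_Rpower_l; [lra|]. rewrite Rabs_minus_sym.
    split; [apply Rabs_pos_lt; lra | lra]. }
  rewrite Rabs_minus_sym. eapply Rle_lt_trans; [apply HC; auto|].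
  eapply Rle_lt_trans;
    [|apply (scaled_lt C (Rpower (Rabs (x - y)) alpha) eps He);
      split; [left; apply exp_pos | exact Hr]].
  apply Rmult_le_compat_r; [left; apply exp_pos | apply RRle_abs].
Qed.

Lemma eq_of_common_approx (l1 l2 : R) :
  (forall eps, 0 < eps -> exists x, Rabs (x - l1) < eps /\ Rabs (x - l2) < eps) ->
  l1 = l2.
Proof.
  intros H. destruct (Req_dec l1 l2) as [E|Hne]; auto. exfalso.
  destruct (H (Rabs (l1 - l2) / 2)) as [x [H1 H2]].
  { apply Rdiv_lt_0_compat; [apply Rabs_pos_lt; lra | lra]. }
  assert (Rabs (l1 - l2) <= Rabs (x - l1) + Rabs (x - l2)).
  { replace (l1 - l2) with (- (x - l1) + (x - l2)) by ring.
    eapply Rle_trans; [apply Rabs_triang|]. rewrite Rabs_Ropp. lra. }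
  lra.
Qed.

Lemma right_deriv_unique (f H : R -> R) (x r l1 l2 : R) : 0 < r ->
  (forall h, 0 <= h < r -> f (x + h) = H (x + h)) ->
  right_deriv f x l1 -> derivable_pt_lim H x l2 -> l1 = l2.
Proof.
  intros Hr Heq H1 H2. apply eq_of_common_approx. intros eps He.
  destruct (H1 eps He) as [d1 [Hd1 P1]]. destruct (H2 eps He) as [d2 P2].
  set (h := Rmin (Rmin d1 d2) r / 2).
  assert (Hm : 0 < Rmin (Rmin d1 d2) r) by (repeat apply Rmin_pos; auto; apply cond_pos).
  pose proof (Rmin_l (Rmin d1 d2) r). pose proof (Rmin_r (Rmin d1 d2) r).
  pose proof (Rmin_l d1 d2). pose proof (Rmin_r d1 d2).
  assert (Hx0 : f x = H x).
  { pose proof (Heq 0 (conj (Rle_refl 0) Hr)) as E. rewrite Rplus_0_r in E. exact E. }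
  assert (Hh : 0 < h < d1) by (unfold h; lra).
  exists ((H (x + h) - H x) / h). split.
  - rewrite <- Heq, <- Hx0 by (unfold h; lra). apply P1, Hh.
  - apply P2; [lra|]. rewrite Rabs_pos_eq; unfold h; lra.
Qed.

Lemma left_deriv_unique (f H : R -> R) (x r l1 l2 : R) : 0 < r ->
  (forall h, - r < h <= 0 -> f (x + h) = H (x + h)) ->
  left_deriv f x l1 -> derivable_pt_lim H x l2 -> l1 = l2.
Proof.
  intros Hr Heq H1 H2. apply eq_of_common_approx. intros eps He.
  destruct (H1 eps He) as [d1 [Hd1 P1]]. destruct (H2 eps He) as [d2 P2].
  set (h := - (Rmin (Rmin d1 d2) r / 2)).
  assert (Hm : 0 < Rmin (Rmin d1 d2) r) by (repeat apply Rmin_pos; auto; apply cond_pos).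
  pose proof (Rmin_l (Rmin d1 d2) r). pose proof (Rmin_r (Rmin d1 d2) r).
  pose proof (Rmin_l d1 d2). pose proof (Rmin_r d1 d2).
  assert (Hx0 : f x = H x).
  { pose proof (Heq 0 (conj (ltac:(lra) : - r < 0) (Rle_refl 0))) as E.
    rewrite Rplus_0_r in E. exact E. }
  assert (Hh : - d1 < h < 0) by (unfold h; lra).
  exists ((H (x + h) - H x) / h). split.
  - rewrite <- Heq, <- Hx0 by (unfold h; lra). apply P1, Hh.
  - apply P2; [lra|]. rewrite Rabs_left; unfold h; lra.
Qed.

Lemma increment_bound (u h l eps : R) : h <> 0 -> 0 < eps ->
  Rabs (u / h - l) < 1 -> Rabs h < eps / (Rabs l + 1) -> Rabs u < eps.
Proof.
  intros Hh He Hq Hsmall. pose proof (Rabs_pos l). pose proof (Rabs_pos h).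
  assert (E : u = h * ((u / h - l) + l)) by (field; auto).
  rewrite E, Rabs_mult.
  assert (Rabs (u / h - l + l) <= Rabs l + 1)
    by (eapply Rle_trans; [apply Rabs_triang | lra]).
  apply Rle_lt_trans with (Rabs h * (Rabs l + 1)); [apply Rmult_le_compat_l; lra|].
  apply Rlt_le_trans with (eps / (Rabs l + 1) * (Rabs l + 1)).
  - apply Rmult_lt_compat_r; lra.
  - right. field. lra.
Qed.

Lemma right_deriv_continuous (f : R -> R) (x l : R) : right_deriv f x l ->
  forall eps, 0 < eps -> exists d, 0 < d /\
    forall y, x <= y < x + d -> Rabs (f y - f x) < eps.
Proof.
  intros H eps He. destruct (H 1 ltac:(lra)) as [d [Hd P]].
  assert (Hq : 0 < eps / (Rabs l + 1)) by (apply Rdiv_lt_0_compat; [|pose proof (Rabs_pos l)]; lra).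
  exists (Rmin d (eps / (Rabs l + 1))). split; [apply Rmin_pos; auto|].
  intros y Hy. pose proof (Rmin_l d (eps / (Rabs l + 1))).
  pose proof (Rmin_r d (eps / (Rabs l + 1))).
  destruct (Req_dec y x) as [->|Hne]; [rewrite Rminus_diag, Rabs_R0; lra|].
  specialize (P (y - x) ltac:(lra)). replace (x + (y - x)) with y in P by ring.
  apply (increment_bound _ (y - x) l); [lra | auto | auto | rewrite Rabs_pos_eq; lra].
Qed.

Lemma left_deriv_continuous (f : R -> R) (x l : R) : left_deriv f x l ->
  forall eps, 0 < eps -> exists d, 0 < d /\
    forall y, x - d < y <= x -> Rabs (f y - f x) < eps.
Proof.
  intros H eps He. destruct (H 1 ltac:(lra)) as [d [Hd P]].
  assert (Hq : 0 < eps / (Rabs l + 1)) by (apply Rdiv_lt_0_compat; [|pose proof (Rabs_pos l)]; lra).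
  exists (Rmin d (eps / (Rabs l + 1))). split; [apply Rmin_pos; auto|].
  intros y Hy. pose proof (Rmin_l d (eps / (Rabs l + 1))).
  pose proof (Rmin_r d (eps / (Rabs l + 1))).
  destruct (Req_dec y x) as [->|Hne]; [rewrite Rminus_diag, Rabs_R0; lra|].
  specialize (P (y - x) ltac:(lra)). replace (x + (y - x)) with y in P by ring.
  apply (increment_bound _ (y - x) l); [lra | auto | auto | rewrite Rabs_left; lra].
Qed.

Lemma cont_on_of_derivatives (lo hi : R) (z dz : R -> R) : lo < hi ->
  right_deriv z lo (dz lo) -> left_deriv z hi (dz hi) ->
  (forall p, lo < p < hi -> derivable_pt_lim z p (dz p)) -> cont_on lo hi z.
Proof.
  intros Hlh Hr Hl Hi x Hx eps He.
  destruct (Req_dec x lo) as [->|N1]; [|destruct (Req_dec x hi) as [->|N2]].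
  - destruct (right_deriv_continuous z lo _ Hr eps He) as [d [Hd P]].
    exists d; split; auto. intros y Hy Hyx. apply P. apply Rabs_def2 in Hyx. lra.
  - destruct (left_deriv_continuous z hi _ Hl eps He) as [d [Hd P]].
    exists d; split; auto. intros y Hy Hyx. apply P. apply Rabs_def2 in Hyx. lra.
  - assert (Hc : continuity_pt z x)
      by (apply derivable_continuous_pt; exists (dz x); apply Hi; lra).
    destruct (continuity_pt_eps z x Hc eps He) as [d [Hd P]]. exists d; split; auto.
Qed.

Lemma const_open (lo hi : R) (f : R -> R) :
  (forall x, lo < x < hi -> derivable_pt_lim f x 0) ->
  forall x y, lo < x < hi -> lo < y < hi -> f x = f y.
Proof.
  intros H x y Hx Hy.
  assert (K : forall u v, lo < u < hi -> lo < v < hi -> u < v -> f u = f v).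
  { intros u v Hu Hv Huv. destruct (MVT_cor2 f (fun _ => 0) u v Huv) as [c [Hc _]].
    - intros c Hc. apply H. lra.
    - lra. }
  destruct (Rtotal_order x y) as [L|[E|L]]; [auto | subst; auto | symmetry; auto].
Qed.

Lemma const_closed (lo hi : R) (f : R -> R) (c : R) : lo < hi -> cont_on lo hi f ->
  (forall x, lo < x < hi -> f x = c) -> forall x, lo <= x <= hi -> f x = c.
Proof.
  intros Hlh Hc Hin x Hx.
  destruct (Req_dec (f x) c) as [E|Hne]; auto. exfalso.
  destruct (Hc x Hx (Rabs (f x - c))) as [d [Hd P]]; [apply Rabs_pos_lt; lra|].
  set (s := Rmin (d / 2) ((hi - lo) / 4)).
  assert (Hs : 0 < s) by (apply Rmin_pos; lra).
  pose proof (Rmin_l (d / 2) ((hi - lo) / 4)). pose proof (Rmin_r (d / 2) ((hi - lo) / 4)).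
  set (y := if Rle_dec x ((lo + hi) / 2) then x + s else x - s).
  assert (Hy : lo < y < hi /\ Rabs (y - x) < d).
  { unfold y, s in *; destruct Rle_dec; (split; [lra|]);
      [rewrite Rabs_pos_eq | rewrite Rabs_left]; lra. }
  destruct Hy as [Hy1 Hy2].
  specialize (P y ltac:(lra) Hy2). rewrite (Hin y Hy1), Rabs_minus_sym in P. lra.
Qed.

Lemma Rint_RInt (f : R -> R) (a b : R) : ex_RInt f a b -> Rint f a b = RInt f a b.
Proof.
  intros H. unfold Rint. destruct excluded_middle_informative as [H1|H1].
  - destruct constructive_indefinite_description as [r [pr Hr]]. simpl.
    rewrite (RInt_Reals f a b pr). auto.
  - exfalso. apply H1. pose proof (ex_RInt_Reals_0 f a b H) as pr.
    exists (RiemannInt pr), pr; auto.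
Qed.

Lemma ex_RInt_cont (f : R -> R) (a b : R) : continuity f -> ex_RInt f a b.
Proof.
  intros H. apply (@ex_RInt_continuous R_CompleteNormedModule). intros z _.
  apply continuity_pt_filterlim, H.
Qed.

(* Specialisations of Coquelicot's generic integral lemmas to real-valued
   functions, stated as equalities in R so that ring and field apply. *)
Lemma RInt_ext_R (f g : R -> R) (a b : R) :
  (forall x, Rmin a b < x < Rmax a b -> f x = g x) -> RInt f a b = RInt g a b.
Proof. apply RInt_ext. Qed.

Lemma RInt_point_R (f : R -> R) (a : R) : RInt f a a = 0.
Proof. apply (@RInt_point R_CompleteNormedModule). Qed.

Lemma Rint_eq_RInt (f fc : R -> R) (a b : R) : continuity fc ->
  (forall x, Rmin a b < x < Rmax a b -> f x = fc x) -> Rint f a b = RInt fc a b.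
Proof.
  intros Hc He. rewrite Rint_RInt.
  - apply RInt_ext_R. auto.
  - apply (ex_RInt_ext fc); [intros; symmetry; auto | apply ex_RInt_cont; auto].
Qed.

Lemma Rint_point (f : R -> R) (a : R) : Rint f a a = 0.
Proof. rewrite Rint_RInt by apply ex_RInt_point. apply RInt_point_R. Qed.

Lemma derivable_RInt (f : R -> R) (c x : R) : continuity f ->
  derivable_pt_lim (fun s => RInt f c s) x (f x).
Proof.
  intros H. apply is_derive_Reals. apply (is_derive_RInt f (fun s => RInt f c s) c x).
  - apply filter_forall. intros y. apply (@RInt_correct R_CompleteNormedModule).
    apply ex_RInt_cont; auto.
  - apply continuity_pt_filterlim, H.
Qed.

Lemma continuity_RInt (f : R -> R) (c : R) : continuity f ->
  continuity (fun s => RInt f c s).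
Proof.
  intros H x. apply derivable_continuous_pt. exists (f x). apply derivable_RInt, H.
Qed.

Lemma RInt_scal_R (f : R -> R) (c a b : R) : continuity f ->
  RInt (fun s => c * f s) a b = c * RInt f a b.
Proof. intros H. exact (RInt_scal f a b c (ex_RInt_cont f a b H)). Qed.

Lemma RInt_plus_R (f1 f2 : R -> R) (a b : R) : continuity f1 -> continuity f2 ->
  RInt (fun s => f1 s + f2 s) a b = RInt f1 a b + RInt f2 a b.
Proof.
  intros H1 H2.
  exact (RInt_plus f1 f2 a b (ex_RInt_cont f1 a b H1) (ex_RInt_cont f2 a b H2)).
Qed.

Lemma RInt_abs_le (f : R -> R) (a b M : R) : ex_RInt f a b ->
  (forall t, Rmin a b <= t <= Rmax a b -> Rabs (f t) <= M) ->
  Rabs (RInt f a b) <= M * Rabs (b - a).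
Proof.
  intros Hi Hb.
  destruct (Rle_dec a b) as [L|L].
  - rewrite Rmin_left, Rmax_right in Hb by lra.
    rewrite (Rabs_pos_eq (b - a)) by lra. rewrite Rmult_comm.
    apply abs_RInt_le_const; auto.
  - rewrite Rmin_right, Rmax_left in Hb by lra.
    rewrite <- (opp_RInt_swap f b a) by (apply ex_RInt_swap; auto).
    change (Rabs (- RInt f b a) <= M * Rabs (b - a)).
    rewrite Rabs_Ropp, (Rabs_minus_sym b a), (Rabs_pos_eq (a - b)) by lra.
    rewrite Rmult_comm. apply abs_RInt_le_const; [lra | apply ex_RInt_swap; auto | auto].
Qed.

Lemma RInt_bound (f : R -> R) (lo hi B : R) : lo <= hi -> continuity f ->
  (forall t, lo <= t <= hi -> Rabs (f t) <= B) ->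
  forall s, lo <= s <= hi -> Rabs (RInt f lo s) <= B * (hi - lo).
Proof.
  intros Hlh Hf Hb s Hs. eapply Rle_trans.
  - apply (RInt_abs_le f lo s B); [apply ex_RInt_cont; auto|].
    intros t Ht. rewrite Rmin_left, Rmax_right in Ht by lra. apply Hb. lra.
  - assert (0 <= B) by (specialize (Hb lo ltac:(lra)); pose proof (Rabs_pos (f lo)); lra).
    apply Rmult_le_compat_l; auto. rewrite Rabs_pos_eq; lra.
Qed.

Lemma RInt_deviation (f g : R -> R) (lo hi B : R) : lo <= hi ->
  continuity f -> continuity g ->
  (forall t, lo <= t <= hi -> Rabs (f t - g t) <= B) ->
  forall s, lo <= s <= hi -> Rabs (RInt f lo s - RInt g lo s) <= B * (hi - lo).
Proof.
  intros Hlh Hf Hg Hb s Hs.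
  replace (RInt f lo s - RInt g lo s) with (RInt (fun t => f t - g t) lo s)
    by (exact (RInt_minus f g lo s (ex_RInt_cont f lo s Hf) (ex_RInt_cont g lo s Hg))).
  apply RInt_bound; auto. solve_continuity.
Qed.

Lemma eq_RInt_of_derive (lo hi : R) (f h : R -> R) : lo < hi ->
  cont_on lo hi f -> continuity h ->
  (forall x, lo < x < hi -> derivable_pt_lim f x (h x)) ->
  forall p, lo <= p <= hi -> f p = f lo + RInt h lo p.
Proof.
  intros Hlh Hf Hh Hd.
  set (m := (lo + hi) / 2).
  assert (Hc : forall p, lo <= p <= hi -> f p - RInt h lo p = f m - RInt h lo m).
  { apply const_closed; [lra | |].
    { apply cont_on_minus; auto. apply continuity_cont_on, continuity_RInt; auto. }
    intros x Hx. apply (const_open lo hi (fun p => f p - RInt h lo p)); [|auto | unfold m; lra].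
    intros y Hy. replace 0 with (h y - h y) by ring.
    apply derivable_pt_lim_minus; [apply Hd; auto | apply derivable_RInt; auto]. }
  intros p Hp. pose proof (Hc p Hp). pose proof (Hc lo ltac:(lra)).
  rewrite RInt_point_R in *. lra.
Qed.

Lemma Rpower_three_halves (x : R) : 0 < x -> Rpower x (3 / 2) = sqrt x ^ 3.
Proof.
  intros Hx. replace (3 / 2) with (1 + / 2) by field.
  rewrite Rpower_plus, Rpower_1, Rpower_sqrt by auto.
  pose proof (sqrt_sqrt x ltac:(lra)). simpl. rewrite Rmult_1_r, <- Rmult_assoc, H. ring.
Qed.

Lemma max_abs_attained (f : R -> R) (lo hi : R) : lo <= hi -> continuity f ->
  exists x, lo <= x <= hi /\ forall t, lo <= t <= hi -> Rabs (f t) <= Rabs (f x).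
Proof.
  intros Hl Hf.
  destruct (continuity_ab_maj (fun x => Rabs (f x)) lo hi Hl) as [x [Hx Hxi]].
  - intros c _. apply (continuity_pt_comp f Rabs); [apply Hf | apply Rcontinuity_abs].
  - exists x; split; auto.
Qed.

Section Profile.

Variables (p0 p1 alpha lam0 : R) (gamma1 gamma2 : R -> R).
Hypotheses (Hp : p0 < p1 < 0) (Halpha : 0 < alpha)
  (Hg1 : holder_on alpha p0 p1 gamma1) (Hg2 : holder_on alpha p1 0 gamma2).

Lemma gam_piecewise_continuous :
  exists c1 c2, continuity c1 /\ continuity c2 /\
    (forall t, p0 <= t < p1 -> gam p1 gamma1 gamma2 t = c1 t) /\
    (forall t, p1 <= t <= 0 -> gam p1 gamma1 gamma2 t = c2 t).
Proof.
  exists (fun x => gamma1 (clamp p0 p1 x)), (fun x => gamma2 (clamp p1 0 x)).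
  split; [apply continuity_clamp; [lra | apply (holder_cont_on alpha); auto]|].
  split; [apply continuity_clamp; [lra | apply (holder_cont_on alpha); auto]|].
  split; intros t Ht; unfold gam; rewrite clamp_id by lra; destruct Rlt_dec; auto; lra.
Qed.

(* Hence gamma is integrable and bounded on [p0, 0], and its primitive Gamma is
   Lipschitz there. *)
Lemma Gam_lipschitz : exists M, forall x y, p0 <= x <= 0 -> p0 <= y <= 0 ->
  Rabs (Gam p1 gamma1 gamma2 x - Gam p1 gamma1 gamma2 y) <= M * Rabs (x - y).
Proof.
  destruct gam_piecewise_continuous as [c1 [c2 [C1 [C2 [E1 E2]]]]].
  unfold Gam. set (gm := gam p1 gamma1 gamma2) in *.
  destruct (max_abs_attained c1 p0 p1 ltac:(lra) C1) as [x1 [_ Hx1]].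
  destruct (max_abs_attained c2 p1 0 ltac:(lra) C2) as [x2 [_ Hx2]].
  set (M := Rabs (c1 x1) + Rabs (c2 x2)).
  assert (HB : forall t, p0 <= t <= 0 -> Rabs (gm t) <= M).
  { intros t Ht. unfold M. pose proof (Rabs_pos (c1 x1)). pose proof (Rabs_pos (c2 x2)).
    destruct (Rlt_le_dec t p1).
    - rewrite E1 by lra. specialize (Hx1 t ltac:(lra)). lra.
    - rewrite E2 by lra. specialize (Hx2 t ltac:(lra)). lra. }
  assert (Hex2 : forall x, p1 <= x <= 0 -> ex_RInt gm 0 x).
  { intros x Hx. apply (ex_RInt_ext c2); [|apply ex_RInt_cont; auto].
    intros t Ht. rewrite Rmin_right, Rmax_left in Ht by lra. symmetry. apply E2. lra. }
  assert (Hex : forall x, p0 <= x <= 0 -> ex_RInt gm 0 x).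
  { intros x Hx. destruct (Rle_dec p1 x); [apply Hex2; lra|].
    apply (ex_RInt_Chasles gm 0 p1 x); [apply Hex2; lra|].
    apply (ex_RInt_ext c1); [|apply ex_RInt_cont; auto].
    intros t Ht. rewrite Rmin_right, Rmax_left in Ht by lra. symmetry. apply E1. lra. }
  exists M. intros x y Hx Hy. rewrite !Rint_RInt by auto.
  assert (Ey : ex_RInt gm y 0) by (apply ex_RInt_swap, Hex; auto).
  assert (Eyx : ex_RInt gm y x) by (apply (ex_RInt_Chasles gm y 0 x Ey (Hex x Hx))).
  replace (RInt gm 0 x - RInt gm 0 y) with (RInt gm y x).
  2:{ rewrite <- (RInt_Chasles gm y 0 x Ey (Hex x Hx)).
      rewrite <- (opp_RInt_swap gm 0 y (Hex y Hy)).
      change (- RInt gm 0 y + RInt gm 0 x = RInt gm 0 x - RInt gm 0 y). ring. }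
  apply RInt_abs_le; auto. intros t Ht. apply HB. split.
  - eapply Rle_trans; [|apply Ht]. apply Rmin_glb; lra.
  - eapply Rle_trans; [apply Ht|]. apply Rmax_lub; lra.
Qed.

Lemma profile_extension :
  (forall p, p0 <= p <= 0 -> 2 * Gam p1 gamma1 gamma2 p < lam0) ->
  exists ac, continuity ac /\ (forall x, 0 < ac x) /\
    (forall p, p0 <= p <= 0 -> aa p1 gamma1 gamma2 lam0 p = ac p).
Proof.
  intros Hl. destruct Gam_lipschitz as [M Lip].
  set (Gc := fun x => Gam p1 gamma1 gamma2 (clamp p0 0 x)).
  assert (CG : continuity Gc).
  { apply (lipschitz_continuity Gc (Rabs M)). intros u v. unfold Gc.
    eapply Rle_trans; [apply Lip; apply clamp_in; lra|].
    eapply Rle_trans; [apply Rmult_le_compat_r; [apply Rabs_pos | apply RRle_abs]|].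
    apply Rmult_le_compat_l; [apply Rabs_pos | apply clamp_lip; lra]. }
  assert (Hpos : forall x, 0 < lam0 - 2 * Gc x).
  { intros x. unfold Gc. pose proof (Hl (clamp p0 0 x) (clamp_in p0 0 x ltac:(lra))). lra. }
  exists (fun x => sqrt (lam0 - 2 * Gc x)). split; [|split].
  - intros x. apply (continuity_pt_comp (fun x => lam0 - 2 * Gc x) sqrt).
    + apply continuity_minus; solve_continuity.
    + apply continuity_pt_sqrt. specialize (Hpos x). lra.
  - intros x. apply sqrt_lt_R0. auto.
  - intros p Hp'. unfold aa, Gc. rewrite clamp_id by auto. reflexivity.
Qed.

(* Since Gamma(0) = 0, lam0^{3/2} = a(0)^3. *)
Lemma lam0_three_halves :
  (forall p, p0 <= p <= 0 -> 2 * Gam p1 gamma1 gamma2 p < lam0) ->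
  Rpower lam0 (3 / 2) = aa p1 gamma1 gamma2 lam0 0 ^ 3.
Proof.
  intros Hl. assert (HG0 : Gam p1 gamma1 gamma2 0 = 0) by apply Rint_point.
  pose proof (Hl 0 ltac:(lra)). unfold aa. rewrite HG0, Rmult_0_r, Rminus_0_r in *.
  apply Rpower_three_halves. lra.
Qed.

End Profile.

Section Integral_equation.

Variables (p0 : R) (a : R -> R).
Hypotheses (Hp0 : p0 < 0) (Ha : continuity a) (Hapos : forall x, 0 < a x).

Lemma continuity_inv_a3 : continuity (fun s => / a s ^ 3).
Proof.
  apply continuity_inv; [solve_continuity|]. intros x. apply pow_nonzero, Rgt_not_eq, Hapos.
Qed.

Definition moment (z : R -> R) (s : R) : R :=
  RInt (fun t => a t * z (clamp p0 0 t)) p0 s.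

Lemma derivable_moment (z : R -> R) (x : R) : continuity (fun t => z (clamp p0 0 t)) ->
  derivable_pt_lim (moment z) x (a x * z (clamp p0 0 x)).
Proof.
  intros Hz. apply (derivable_RInt (fun t => a t * z (clamp p0 0 t))). solve_continuity.
Qed.

Lemma continuity_moment (z : R -> R) : continuity (fun t => z (clamp p0 0 t)) ->
  continuity (moment z).
Proof.
  intros Hz. apply (continuity_RInt (fun t => a t * z (clamp p0 0 t))). solve_continuity.
Qed.

Lemma integral_equation (b z dz : R -> R) (mu : R) :
  (forall p, p0 <= p <= 0 -> b p = a p) ->
  z p0 = 0 -> dz p0 = 1 -> right_deriv z p0 (dz p0) -> left_deriv z 0 (dz 0) ->
  (forall p, p0 < p < 0 -> derivable_pt_lim z p (dz p) /\
     derivable_pt_lim (fun q => b q ^ 3 * dz q) p (mu * b p * z p)) ->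
  (forall p, p0 <= p <= 0 ->
     z p = RInt (fun s => (a p0 ^ 3 + mu * moment z s) / a s ^ 3) p0 p) /\
  a 0 ^ 3 * dz 0 = a p0 ^ 3 + mu * moment z 0.
Proof.
  intros Hb Hz0 Hdz0 Hr Hl Hi.
  assert (Hzon : cont_on p0 0 z)
    by (apply (cont_on_of_derivatives p0 0 z dz); auto; intros; apply Hi; auto).
  assert (Hzc : continuity (fun t => z (clamp p0 0 t))) by (apply continuity_clamp; auto; lra).
  set (F := fun s => mu * moment z s).
  assert (HF : forall x, derivable_pt_lim F x (mu * (a x * z (clamp p0 0 x)))).
  { intros x. apply derivable_pt_lim_scal, derivable_moment, Hzc. }
  (* first integral: the flux b^3 z' - mu J is constant on (p0, 0) *)
  set (c := b (p0 / 2) ^ 3 * dz (p0 / 2) - F (p0 / 2)).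
  assert (Hflux : forall x, p0 < x < 0 -> a x ^ 3 * dz x = c + F x).
  { intros x Hx. rewrite <- Hb by lra. unfold c.
    enough (b x ^ 3 * dz x - F x = b (p0 / 2) ^ 3 * dz (p0 / 2) - F (p0 / 2)) by lra.
    apply (const_open p0 0 (fun x => b x ^ 3 * dz x - F x)); [|auto | lra].
    intros y Hy. replace 0 with (mu * b y * z y - mu * (a y * z (clamp p0 0 y))).
    - apply derivable_pt_lim_minus; [apply Hi; auto | apply HF].
    - rewrite clamp_id, Hb by lra. ring. }
  set (h := fun s => (c + F s) / a s ^ 3).
  assert (Hh : continuity h).
  { unfold h. apply continuity_mult; [|apply continuity_inv_a3].
    apply continuity_plus; [solve_continuity|]. intros x. apply derivable_continuous_pt.
    exists (mu * (a x * z (clamp p0 0 x))). apply HF. }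
  assert (Hdz : forall x, p0 < x < 0 -> dz x = h x).
  { intros x Hx. unfold h. rewrite <- Hflux by auto. field. apply Rgt_not_eq, Hapos. }
  assert (Hzh : forall p, p0 <= p <= 0 -> z p = RInt h p0 p).
  { intros p Hp. rewrite (eq_RInt_of_derive p0 0 z h), Hz0; auto; [ring|].
    intros x Hx. rewrite <- Hdz by auto. apply Hi, Hx. }
  assert (HF0 : F p0 = 0) by (unfold F, moment; rewrite RInt_point_R; ring).
  (* the initial slope z'(p0) = 1 fixes the flux *)
  assert (Hc : c = a p0 ^ 3).
  { assert (E : 1 = h p0).
    { rewrite <- Hdz0.
      apply (right_deriv_unique z (fun p => RInt h p0 p) p0 (- p0)); auto; [lra | |].
      - intros u Hu. apply Hzh. lra.
      - apply derivable_RInt, Hh. }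
    unfold h in E. rewrite HF0, Rplus_0_r in E.
    apply (Rmult_eq_compat_l (a p0 ^ 3)) in E. rewrite Rmult_1_r in E.
    rewrite E. field. apply Rgt_not_eq, Hapos. }
  split.
  - intros p Hp. rewrite Hzh by auto. apply RInt_ext_R.
    intros x _. unfold h, F. rewrite Hc. reflexivity.
  - assert (E : dz 0 = h 0).
    { apply (left_deriv_unique z (fun p => RInt h p0 p) 0 (- p0)); auto; [lra | |].
      - intros u Hu. apply Hzh. lra.
      - apply derivable_RInt, Hh. }
    rewrite E. unfold h, F. rewrite <- Hc. field. apply Rgt_not_eq, Hapos.
Qed.

Definition primI (p : R) : R := RInt (fun s => / a s ^ 3) p0 p.

Definition second_moment (z : R -> R) : R := RInt (fun s => moment z s / a s ^ 3) p0 0.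

Lemma continuity_primI : continuity primI.
Proof. apply (continuity_RInt (fun s => / a s ^ 3)), continuity_inv_a3. Qed.

Lemma second_moment_by_parts (z : R -> R) : continuity (fun t => z (clamp p0 0 t)) ->
  second_moment z =
  primI 0 * moment z 0 - RInt (fun s => a s * primI s * z (clamp p0 0 s)) p0 0.
Proof.
  intros Hz. pose proof continuity_inv_a3 as Hi3. pose proof continuity_primI as CI.
  pose proof (continuity_moment z Hz) as CM.
  set (df := fun s => moment z s / a s ^ 3 + a s * primI s * z (clamp p0 0 s)).
  assert (Hd : is_RInt df p0 0 (minus (primI 0 * moment z 0) (primI p0 * moment z p0))).
  { apply (is_RInt_derive (fun s => primI s * moment z s) df).
    - intros x _. apply is_derive_Reals.
      replace (df x) with (/ a x ^ 3 * moment z x + primI x * (a x * z (clamp p0 0 x)))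
        by (unfold df; field; apply Rgt_not_eq, Hapos).
      apply derivable_pt_lim_mult; [|apply derivable_moment; auto].
      apply (derivable_RInt (fun s => / a s ^ 3)), Hi3.
    - intros x _. apply continuity_pt_filterlim. unfold df. solve_continuity. }
  apply (@is_RInt_unique R_CompleteNormedModule) in Hd.
  assert (HI0 : primI p0 = 0) by apply RInt_point_R.
  rewrite HI0 in Hd. change (RInt df p0 0 = primI 0 * moment z 0 - 0 * moment z p0) in Hd.
  unfold df in Hd.
  rewrite RInt_plus_R in Hd by solve_continuity.
  unfold second_moment. lra.
Qed.

Lemma Rint_inv_cube (b : R -> R) : (forall p, p0 <= p <= 0 -> b p = a p) ->
  forall p, p0 <= p <= 0 -> Rint (fun s => / b s ^ 3) p0 p = primI p.
Proof.
  intros Hb p Hp. apply Rint_eq_RInt; [apply continuity_inv_a3|].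
  intros t Ht. rewrite Rmin_left, Rmax_right in Ht by lra. rewrite Hb by lra. reflexivity.
Qed.

Lemma Rint_weighted_square (b : R -> R) : (forall p, p0 <= p <= 0 -> b p = a p) ->
  Rint (fun p => b p * (Rint (fun s => / b s ^ 3) p0 p) ^ 2) p0 0 =
  RInt (fun s => a s * primI s ^ 2) p0 0.
Proof.
  intros Hb. pose proof continuity_primI. apply Rint_eq_RInt; [solve_continuity|].
  intros x Hx. rewrite Rmin_left, Rmax_right in Hx by lra.
  rewrite Hb, Rint_inv_cube by (auto; lra). reflexivity.
Qed.

Lemma a_bounds : exists Amax Binv, 0 <= Amax /\ 0 <= Binv /\
  forall t, p0 <= t <= 0 -> Rabs (a t) <= Amax /\ Rabs (/ a t ^ 3) <= Binv.
Proof.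
  destruct (max_abs_attained a p0 0 ltac:(lra) Ha) as [xa [_ Hxa]].
  destruct (max_abs_attained (fun s => / a s ^ 3) p0 0 ltac:(lra) continuity_inv_a3)
    as [xb [_ Hxb]].
  exists (Rabs (a xa)), (Rabs (/ a xb ^ 3)).
  split; [apply Rabs_pos|]. split; [apply Rabs_pos|]. auto.
Qed.

Section Family.

Variables (A : R) (Z : R -> R -> R).
Hypotheses (HZc : forall mu, continuity (fun t => Z mu (clamp p0 0 t)))
  (HZ : forall mu p, p0 <= p <= 0 ->
     Z mu p = RInt (fun s => (A + mu * moment (Z mu) s) / a s ^ 3) p0 p).

Lemma Z_at_zero (mu : R) : Z mu 0 = A * primI 0 + mu * second_moment (Z mu).
Proof.
  rewrite HZ by lra. pose proof continuity_inv_a3.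
  pose proof (continuity_moment (Z mu) (HZc mu)).
  rewrite (RInt_ext_R _ (fun s => A * / a s ^ 3 + mu * (moment (Z mu) s / a s ^ 3))).
  - rewrite RInt_plus_R, !RInt_scal_R by solve_continuity. reflexivity.
  - intros x _. field. apply Rgt_not_eq, Hapos.
Qed.

Lemma Z_unperturbed (p : R) : p0 <= p <= 0 -> Z 0 p = A * primI p.
Proof.
  intros Hp. rewrite HZ by auto. unfold primI.
  rewrite <- RInt_scal_R by apply continuity_inv_a3.
  apply RInt_ext_R. intros x _. field. apply Rgt_not_eq, Hapos.
Qed.

Lemma second_moment_unperturbed :
  second_moment (Z 0) =
  primI 0 * moment (Z 0) 0 - A * RInt (fun s => a s * primI s ^ 2) p0 0.
Proof.
  rewrite second_moment_by_parts by auto. f_equal.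
  pose proof continuity_primI.
  rewrite <- RInt_scal_R by solve_continuity.
  apply RInt_ext_R. intros x Hx. rewrite Rmin_left, Rmax_right in Hx by lra.
  rewrite clamp_id, Z_unperturbed by lra. ring.
Qed.

Lemma Z_max_attained (mu : R) :
  exists x, p0 <= x <= 0 /\ forall t, p0 <= t <= 0 -> Rabs (Z mu t) <= Rabs (Z mu x).
Proof.
  destruct (max_abs_attained _ p0 0 ltac:(lra) (HZc mu)) as [x [Hx Hmax]].
  exists x. split; auto. intros t Ht. specialize (Hmax t Ht).
  rewrite !clamp_id in Hmax by auto. exact Hmax.
Qed.

Lemma deviation_bound : exists Kc, 0 <= Kc /\
  forall mu M, 0 <= M -> (forall t, p0 <= t <= 0 -> Rabs (Z mu t) <= M) ->
  forall p, p0 <= p <= 0 -> Rabs (Z mu p - Z 0 p) <= Rabs mu * Kc * M.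
Proof.
  destruct a_bounds as [Amax [Binv [HA [HB Hab]]]].
  pose proof continuity_inv_a3.
  exists (Amax * Binv * (0 - p0) * (0 - p0)). split.
  { apply Rmult_le_pos; [apply Rmult_le_pos; [apply Rmult_le_pos|]|]; lra. }
  intros mu M HM Hb p Hp. pose proof (continuity_moment (Z mu) (HZc mu)).
  pose proof (continuity_moment (Z 0) (HZc 0)).
  assert (HJ : forall s, p0 <= s <= 0 -> Rabs (moment (Z mu) s) <= Amax * M * (0 - p0)).
  { pose proof (HZc mu). apply (RInt_bound (fun t => a t * Z mu (clamp p0 0 t)));
      [lra | solve_continuity |]. intros t Ht.
    rewrite Rabs_mult, clamp_id by auto. specialize (Hab t Ht).
    apply Rmult_le_compat; try apply Rabs_pos; try apply Hb; tauto. }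
  rewrite !HZ by auto.
  replace (Rabs mu * (Amax * Binv * (0 - p0) * (0 - p0)) * M)
    with (Rabs mu * (Amax * M * (0 - p0)) * Binv * (0 - p0)) by ring.
  apply RInt_deviation; [lra | solve_continuity | solve_continuity | | auto].
  intros t Ht.
  replace ((A + mu * moment (Z mu) t) / a t ^ 3 - (A + 0 * moment (Z 0) t) / a t ^ 3)
    with (mu * moment (Z mu) t * / a t ^ 3) by (field; apply Rgt_not_eq, Hapos).
  rewrite !Rabs_mult. specialize (Hab t Ht).
  apply Rmult_le_compat; [apply Rmult_le_pos; apply Rabs_pos | apply Rabs_pos | | tauto].
  apply Rmult_le_compat_l; [apply Rabs_pos | auto].
Qed.

(* For |mu| Kc <= 1/2 the sup of z_mu is at most twice that of z_0, hence
   z_mu -> z_0 uniformly on [p0, 0], linearly in mu. *)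
Lemma uniform_convergence : exists C mu0, 0 < mu0 /\
  forall mu, Rabs mu < mu0 -> forall t, p0 <= t <= 0 -> Rabs (Z mu t - Z 0 t) <= C * Rabs mu.
Proof.
  destruct deviation_bound as [Kc [HKc Hdev]].
  destruct (Z_max_attained 0) as [x0 [Hx0 H0max]].
  pose proof (Rabs_pos (Z 0 x0)). set (M0 := Rabs (Z 0 x0)) in *.
  exists (Kc * (2 * M0)), (/ (2 * Kc + 1)).
  split; [apply Rinv_0_lt_compat; lra|].
  intros mu Hmu.
  destruct (Z_max_attained mu) as [xm [Hxm Hmmax]].
  pose proof (Rabs_pos (Z mu xm)). pose proof (Rabs_pos mu).
  set (Mm := Rabs (Z mu xm)) in *.
  assert (Hsmall : Rabs mu * Kc <= / 2).
  { assert (Rabs mu * Kc <= / (2 * Kc + 1) * Kc) by (apply Rmult_le_compat_r; lra).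
    assert (/ (2 * Kc + 1) * Kc <= / 2).
    { apply (Rmult_le_reg_l (2 * Kc + 1)); [lra|].
      rewrite <- Rmult_assoc, Rinv_r by lra. lra. }
    lra. }
  assert (HMm : Mm <= 2 * M0).
  { assert (Mm <= Rabs (Z 0 xm) + Rabs mu * Kc * Mm).
    { unfold Mm at 1. replace (Z mu xm) with (Z 0 xm + (Z mu xm - Z 0 xm)) by ring.
      eapply Rle_trans; [apply Rabs_triang|]. apply Rplus_le_compat_l.
      apply Hdev; auto. }
    specialize (H0max xm Hxm). nra. }
  intros t Ht. eapply Rle_trans; [apply (Hdev mu Mm); auto|].
  assert (0 <= Rabs mu * Kc) by (apply Rmult_le_pos; lra). nra.
Qed.

Lemma moment_convergence : exists C mu0, 0 < mu0 /\
  forall mu, Rabs mu < mu0 -> forall s, p0 <= s <= 0 ->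
    Rabs (moment (Z mu) s - moment (Z 0) s) <= C * Rabs mu.
Proof.
  destruct uniform_convergence as [C [mu0 [Hmu0 HZconv]]].
  destruct a_bounds as [Amax [Binv [_ [_ Hab]]]].
  exists (Amax * C * (0 - p0)), mu0. split; auto.
  intros mu Hmu s Hs. pose proof (HZc mu). pose proof (HZc 0).
  replace (Amax * C * (0 - p0) * Rabs mu) with (Amax * (C * Rabs mu) * (0 - p0)) by ring.
  apply RInt_deviation; [lra | solve_continuity | solve_continuity | | auto].
  intros t Ht. rewrite !clamp_id by auto.
  replace (a t * Z mu t - a t * Z 0 t) with (a t * (Z mu t - Z 0 t)) by ring.
  rewrite Rabs_mult. apply Rmult_le_compat; try apply Rabs_pos; [apply Hab; auto | auto].
Qed.

Lemma continuity_moment_mu : continuity_pt (fun mu => moment (Z mu) 0) 0.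
Proof.
  destruct moment_convergence as [C [mu0 [Hmu0 Hconv]]].
  apply (continuity_pt_of_local_lipschitz _ C mu0 Hmu0).
  intros mu Hmu. apply Hconv; auto; lra.
Qed.

Lemma continuity_second_moment_mu : continuity_pt (fun mu => second_moment (Z mu)) 0.
Proof.
  destruct moment_convergence as [C [mu0 [Hmu0 Hconv]]].
  destruct a_bounds as [Amax [Binv [_ [_ Hab]]]].
  pose proof continuity_inv_a3.
  apply (continuity_pt_of_local_lipschitz _ (C * Binv * (0 - p0)) mu0 Hmu0).
  intros mu Hmu. unfold second_moment.
  pose proof (continuity_moment (Z mu) (HZc mu)). pose proof (continuity_moment (Z 0) (HZc 0)).
  replace (C * Binv * (0 - p0) * Rabs mu) with (C * Rabs mu * Binv * (0 - p0)) by ring.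
  apply RInt_deviation; [lra | solve_continuity | solve_continuity | | lra].
  intros t Ht.
  replace (moment (Z mu) t / a t ^ 3 - moment (Z 0) t / a t ^ 3)
    with ((moment (Z mu) t - moment (Z 0) t) * / a t ^ 3) by (field; apply Rgt_not_eq, Hapos).
  rewrite Rabs_mult.
  apply Rmult_le_compat; try apply Rabs_pos; [apply Hconv; auto | apply Hab; auto].
Qed.

Lemma continuity_factor (k c s : R) :
  continuity_pt (fun mu => moment (Z mu) 0 - k * second_moment (Z mu) - c
                           - s * mu * second_moment (Z mu)) 0.
Proof.
  pose proof continuity_moment_mu. pose proof continuity_second_moment_mu.
  assert (Hconst : forall r : R, continuity_pt (fun _ => r) 0)
    by (intros r; apply continuity_pt_const; intros ? ?; reflexivity).
  repeat apply continuity_pt_minus; repeat apply continuity_pt_mult; auto.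
  apply continuity_pt_id.
Qed.

End Family.

End Integral_equation.

Lemma frak_z_family (p0 p1 lam0 : R) (gamma1 gamma2 a : R -> R) (Z DZ : R -> R -> R) :
  p0 < 0 -> continuity a -> (forall x, 0 < a x) ->
  (forall p, p0 <= p <= 0 -> aa p1 gamma1 gamma2 lam0 p = a p) ->
  (forall mu, is_frak_z p0 p1 gamma1 gamma2 lam0 mu (Z mu) (DZ mu)) ->
  forall mu, continuity (fun t => Z mu (clamp p0 0 t)) /\
    (forall p, p0 <= p <= 0 ->
       Z mu p = RInt (fun s => (a p0 ^ 3 + mu * moment p0 a (Z mu) s) / a s ^ 3) p0 p) /\
    a 0 ^ 3 * DZ mu 0 = a p0 ^ 3 + mu * moment p0 a (Z mu) 0.
Proof.
  intros Hp0 Ha Hapos Haa HZ mu. destruct (HZ mu) as [H0 [H1 [H2 [H3 H4]]]]. split.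
  - apply continuity_clamp; [lra|].
    apply (cont_on_of_derivatives p0 0 (Z mu) (DZ mu)); auto. intros; apply H4; auto.
  - exact (integral_equation p0 a Hp0 Ha Hapos _ (Z mu) (DZ mu) mu Haa H0 H1 H2 H3 H4).
Qed.

Lemma derivable_at_zero_of_factor (F G : R -> R) :
  (forall mu, F mu = mu * G mu) -> continuity_pt G 0 -> derivable_pt_lim F 0 (G 0).
Proof.
  intros HF HG eps Heps.
  destruct (continuity_pt_eps G 0 HG eps Heps) as [d [Hd P]].
  exists (mkposreal d Hd). intros h Hh Hhd. simpl in Hhd.
  rewrite Rplus_0_l, !HF, Rmult_0_l, Rminus_0_r.
  replace (h * G h / h) with (G h) by (field; auto).
  apply P. rewrite Rminus_0_r. exact Hhd.
Qed.

Theorem mainTheorem9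
  (g sigma p0 p1 alpha : R) (gamma1 gamma2 : R -> R) (lam0 : R)
  (Z DZ : R -> R -> R)
  (Hg : 0 < g) (Hsigma : 0 < sigma) (Hp : p0 < p1 < 0)
  (Halpha : 0 < alpha < 1)
  (Hg1 : holder_on alpha p0 p1 gamma1) (Hg2 : holder_on alpha p1 0 gamma2)
  (Hlam0 : forall p, p0 <= p <= 0 -> 2 * Gam p1 gamma1 gamma2 p < lam0)
  (Hlam0eq : / g = Rint (fun p => / (aa p1 gamma1 gamma2 lam0 p) ^ 3) p0 0)
  (HZ : forall mu, is_frak_z p0 p1 gamma1 gamma2 lam0 mu (Z mu) (DZ mu)) :
  exists l : R,
    derivable_pt_lim (fun mu => Xi g sigma lam0 mu (Z mu) (DZ mu)) 0 l /\
    (l <= 0 <->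
     Rint (fun p => aa p1 gamma1 gamma2 lam0 p *
                    (Rint (fun s => / (aa p1 gamma1 gamma2 lam0 s) ^ 3) p0 p) ^ 2)
          p0 0 <= sigma / g ^ 2).
Proof.
  destruct (profile_extension p0 p1 alpha lam0 gamma1 gamma2 Hp (proj1 Halpha) Hg1 Hg2 Hlam0)
    as [a [Ha [Hapos Haa]]].
  assert (Hp0 : p0 < 0) by lra.
  pose proof (frak_z_family p0 p1 lam0 gamma1 gamma2 a Z DZ Hp0 Ha Hapos Haa HZ) as HF.
  pose proof (fun mu => proj1 (HF mu)) as HZc.
  pose proof (fun mu => proj1 (proj2 (HF mu))) as HZeq.
  set (A := a p0 ^ 3) in *. set (I0 := primI p0 a 0).
  assert (HI0 : I0 = / g)
    by (rewrite Hlam0eq; symmetry; apply (Rint_inv_cube p0 a Ha Hapos); auto; lra).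
  set (K := fun mu => second_moment p0 a (Z mu)).
  set (G := fun mu => moment p0 a (Z mu) 0 - g * K mu - sigma * A * I0 - sigma * mu * K mu).
  exists (G 0). split.
  - apply derivable_at_zero_of_factor.
    + intros mu. unfold Xi, G, K.
      rewrite (lam0_three_halves p0 p1 lam0 gamma1 gamma2 Hp Hlam0), Haa by lra.
      rewrite (proj2 (proj2 (HF mu))), (Z_at_zero p0 a Hp0 Ha Hapos A Z HZc HZeq).
      fold I0. rewrite HI0. field. lra.
    + exact (continuity_factor p0 a Hp0 Ha Hapos A Z HZc HZeq g (sigma * A * I0) sigma).
  - set (Q := RInt (fun s => a s * primI p0 a s ^ 2) p0 0).
    assert (HG0 : G 0 = A * g * (Q - sigma / g ^ 2)).
    { unfold G, K. rewrite (second_moment_unperturbed p0 a Hp0 Ha Hapos A Z HZc HZeq).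
      fold I0 Q. rewrite HI0. field. lra. }
    assert (HAg : 0 < A * g) by (apply Rmult_lt_0_compat; [apply pow_lt, Hapos | lra]).
    rewrite (Rint_weighted_square p0 a Hp0 Ha Hapos) by auto. fold Q.
    rewrite HG0. split; intros; nra.
Qed.
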